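(* Let an FCA with state set $S$, neighborhood $m=l+1+r$, local rule $f$ and boundary type $b\in\{\text{null},\text{periodic}\}$ be given, and let $G$ be its reversibility graph. Let $N$ be a negative vertex of $G$ with value $k\ge 1$, and let $C_1,\dots,C_i$ be circuits of $G$ passing through $N$, of lengths $r_1,\dots,r_i$. Then for all integers $x_1,\dots,x_i\ge 0$ the FCA is not $(k+x_1r_1+\dots+x_ir_i)$-cell-reversible.
   Context: A one-dimensional finite cellular automaton (FCA) is given by a state set $S=\{0,1,\dots,s-1\}$, integers $l,r\ge 0$ with neighborhood size $m=l+1+r\ge 2$, a local rule $f:S^m\to S$, and a boundary type $b\in\{\text{null},\text{periodic}\}$. For $n\ge 1$ the global map $\tau_n:S^n\to S^n$ sends $(x_0,\dots,x_{n-1})$ to $(y_0,\dots,y_{n-1})$ with $y_i=f(x_{i-l},\dots,x_{i+r})$, where for the null boundary $x_j=0$ whenever $j<0$ or $j>n-1$, and for the periodic boundary indices are taken modulo $n$. The FCA is $n$-cell-reversible if $\tau_n$ is a bijection (equivalently, since $S^n$ is finite, surjective). Reversibility graph (RG). Null boundary: vertices are subsets of $S^{m-1}$; the root is $N_0=\{(a_1,\dots,a_{m-1})\in S^{m-1}: a_1=\dots=a_l=0\}$; the acceptance set is $R=\{(a_1,\dots,a_{m-1})\in S^{m-1}: a_{m-r}=\dots=a_{m-1}=0\}$ (so $R=S^{m-1}$ if $r=0$); for a subset $N$ and $c\in S$, $\delta(N,c)=\{(a_1,\dots,a_{m-1})\in S^{m-1}:\exists a_0\in S,\ (a_0,\dots,a_{m-2})\in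 N,\ f(a_0,a_1,\dots,a_{m-1})=c\}$. Periodic boundary: vertices are subsets of $S^{m-1}\times S^{m-1}$; the root and the acceptance set are $N_0=R=\{(a,a):a\in S^{m-1}\}$; $\delta(N,c)=\{((a_1,\dots,a_{m-1}),(b_1,\dots,b_{m-1})):\exists b_0\in S,\ ((a_1,\dots,a_{m-1}),(b_0,\dots,b_{m-2}))\in N,\ f(b_0,\dots,b_{m-1})=c\}$. In both cases the RG is the directed graph whose vertex set consists of all subsets obtainable from $N_0$ by repeatedly applying $\delta$ (including $N_0$; equal subsets are the same vertex; the empty set may occur), with, for each vertex $N$ and each $c\in S$, an edge labelled $c$ from $N$ to $\delta(N,c)$. The value of a vertex $N$ is the length of a shortest directed path from $N_0$ to $N$. A vertex $N$ is negative if $N\cap R=\emptyset$. A circuit is an elementary directed cycle of the RG (a closed directed path with no repeated vertex other than its start = end; a loop is a circuit of length $1$); its length is its number of edges, and it passes through $N$ if $N$ is one of its vertices. *)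

From HB Require Import structures.
From mathcomp Require Import all_boot.
Set Implicit Arguments. Unset Strict Implicit. Unset Printing Implicit Defensive.

(* State set S = {0,...,s} = 'I_s.+1 (i.e. s.+1 >= 1 states, containing 0). *)
Notation St s := 'I_s.+1.

Inductive boundary := Null | Periodic.

Section FCA.
Variables (s l r : nat).
Local Notation S := (St s).
(* Local rule f : S^m -> S with m = l+1+r, written (l+r).+1;
   tuple index j corresponds to the neighbour x_{i-l+j}. *)
Variable f : (l + r).+1.-tuple S -> S.

(* value of cell p (integer i+j-l encoded by i+j >= l test) *)
Definition nbr (b : boundary) (n : nat) (x : n.-tuple S) (i j : nat) : S :=
  match b with
  | Null => if l <= i + j then nth ord0 x (i + j - l) else ord0
  | Periodic => nth ord0 x ((i + j + l * n - l) %% n)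
  end.

Definition tau (b : boundary) (n : nat) (x : n.-tuple S) : n.-tuple S :=
  [tuple f [tuple nbr b x i j | j < (l + r).+1] | i < n].

Definition reversible (b : boundary) (n : nat) : Prop := bijective (@tau b n).

Record rgraph := RGraph {
  rgT : finType;
  rg_root : {set rgT};
  rg_delta : {set rgT} -> S -> {set rgT};
  rg_acc : {set rgT} }.

Local Notation tup := ((l + r).-tuple S).

(* (a0, a_1, ..., a_{m-2}) from a0 and a = (a_1,...,a_{m-1}) *)
Definition shiftin (a0 : S) (a : tup) : tup := [tuple nth a0 (a0 :: a) j | j < l + r].

Definition null_root : {set tup} := [set a : tup | [forall j : 'I_(l + r), (j < l) ==> (tnth a j == ord0)]].
Definition null_acc : {set tup} := [set a : tup | [forall j : 'I_(l + r), (l <= j) ==> (tnth a j == ord0)]].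
Definition null_delta (N : {set tup}) (c : S) : {set tup} :=
  [set a : tup | [exists a0 : S, (shiftin a0 a \in N) && (f [tuple of a0 :: a] == c)]].

Definition per_root : {set tup * tup} := [set p : tup * tup | p.1 == p.2].
Definition per_delta (N : {set tup * tup}) (c : S) : {set tup * tup} :=
  [set p : tup * tup | [exists b0 : S,
     ((p.1, shiftin b0 p.2) \in N) && (f [tuple of b0 :: p.2] == c)]].

Definition RG (b : boundary) : rgraph :=
  match b with
  | Null => @RGraph tup null_root null_delta null_acc
  | Periodic => @RGraph (prod tup tup) per_root per_delta per_root
  end.

End FCA.

Section Graph.
Variables (s : nat) (G : rgraph s).
Local Notation V := {set rgT G}.

Definition rg_run (w : seq (St s)) : V := foldl (@rg_delta s G) (rg_root G) w.

Definition rg_value (N : V) (k : nat) : Prop :=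
  (exists w, size w = k /\ rg_run w = N) /\ (forall w, rg_run w = N -> k <= size w).

Definition rg_negative (N : V) : bool := N :&: rg_acc G == set0.

Definition rg_edge : rel V := fun u v => [exists c, rg_delta u c == v].

(* an elementary directed cycle, given by its (distinct) vertices in order;
   its length is size C *)
Definition rg_circuit (C : seq V) : bool := [&& C != [::], uniq C & cycle rg_edge C].
End Graph.

From Pilot Require Import Defs.
From HB Require Import structures.
From mathcomp Require Import all_boot.
From mathcomp Require Import zify.

Set Implicit Arguments.
Unset Strict Implicit.
Unset Printing Implicit Defensive.

(* Reading an image y = tau x letter by letter, the RG run keeps track of the
   sliding window of the (l+r) cells of x that the next letter still depends
   on; at the end of y that window lies in the acceptance set.  So every image
   under tau_n drives the root to a vertex meeting R.  On the other hand the
   root reaches the negative vertex N by a word of length k, and going around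
   the circuits C_j (x_j times each) returns to N; the resulting word of length
   k + sum x_j r_j is therefore not an image, and tau is not surjective. *)

Section Windows.
Variables (s l r : nat) (f : (l + r).+1.-tuple 'I_s.+1 -> 'I_s.+1).
Local Notation S := 'I_s.+1.
Local Notation tup := ((l + r).-tuple S).

Lemma nbr_shift b n (x : n.-tuple S) i j : nbr l b x i j = nbr l b x 0 (i + j).
Proof. by case: b. Qed.

(* cells t - l, ..., t + r - 1 of x, with the boundary convention of b *)
Definition window b n (x : n.-tuple S) t : tup := [tuple nbr l b x 0 (t + j) | j < l + r].

Lemma nth_window b n (x : n.-tuple S) t k d : k < l + r ->
  nth d (window b x t) k = nbr l b x 0 (t + k).
Proof. by move=> lt_k; rewrite -[k]/(nat_of_ord (Ordinal lt_k)) -tnth_nth tnth_mktuple. Qed.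

Lemma shiftin_window b n (x : n.-tuple S) t :
  shiftin (nbr l b x 0 t) (window b x t.+1) = window b x t.
Proof.
apply: eq_from_tnth => j; rewrite !tnth_mktuple.
case: j => [[|k] lt_k] /=; first by rewrite addn0.
by rewrite nth_window ?addSnnS //; lia.
Qed.

Lemma cons_window b n (x : n.-tuple S) t :
  [tuple of nbr l b x 0 t :: window b x t.+1] = [tuple nbr l b x t j | j < (l + r).+1].
Proof.
apply: eq_from_tnth => j; rewrite tnth_mktuple (tnth_nth (nbr l b x 0 t)) [RHS]nbr_shift.
case: j => [[|k] lt_k]; first by rewrite addn0.
by rewrite [nth _ _ _]/= nth_window ?addSnnS //; lia.
Qed.

Lemma nth_tau b n (x : n.-tuple S) t : t < n ->
  nth ord0 (tau f b x) t = f [tuple of nbr l b x 0 t :: window b x t.+1].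
Proof.
by move=> lt_t; rewrite cons_window -[t]/(nat_of_ord (Ordinal lt_t)) -tnth_nth tnth_mktuple.
Qed.

Lemma window_null_run n (x : n.-tuple S) t : t <= n ->
  window Null x t \in rg_run (RG f Null) (take t (tau f Null x)).
Proof.
elim: t => [|t IHt] le_tn.
  rewrite take0 inE; apply/forallP => j; apply/implyP => lt_jl.
  by rewrite tnth_mktuple /= leqNgt lt_jl.
rewrite (take_nth ord0) ?size_tuple // /rg_run foldl_rcons inE.
apply/existsP; exists (nbr l Null x 0 t).
by rewrite shiftin_window nth_tau // eqxx andbT IHt // ltnW.
Qed.

Lemma window_null_acc n (x : n.-tuple S) : window Null x n \in null_acc s l r.
Proof.
rewrite inE; apply/forallP => j; apply/implyP => le_lj.
rewrite tnth_mktuple /= ifT; last by lia.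
by rewrite nth_default // size_tuple; lia.
Qed.

Lemma window_periodic_run n (x : n.-tuple S) t : t <= n ->
  (window Periodic x 0, window Periodic x t)
    \in rg_run (RG f Periodic) (take t (tau f Periodic x)).
Proof.
elim: t => [|t IHt] le_tn; first by rewrite take0 inE.
rewrite (take_nth ord0) ?size_tuple // /rg_run foldl_rcons inE.
apply/existsP; exists (nbr l Periodic x 0 t).
by rewrite shiftin_window nth_tau // eqxx andbT IHt // ltnW.
Qed.

Lemma window_periodic_wrap n (x : n.-tuple S) : 0 < n ->
  window Periodic x n = window Periodic x 0.
Proof.
move=> n_gt0; apply: eq_from_tnth => j; rewrite !tnth_mktuple /=.
have le_l_ln : l <= l * n by rewrite leq_pmulr.
by rewrite (_ : n + j + l * n - l = (j + l * n - l) + n) ?modnDr //; lia.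
Qed.

Lemma rg_run_tau_acc b n (x : n.-tuple S) : 0 < n ->
  rg_run (RG f b) (tau f b x) :&: rg_acc (RG f b) != set0.
Proof.
move=> n_gt0; apply/set0Pn; case: b.
- exists (window Null x n); rewrite inE window_null_acc andbT.
  by have := window_null_run x (leqnn n); rewrite take_oversize ?size_tuple.
- exists (window Periodic x 0, window Periodic x n).
  have := window_periodic_run x (leqnn n); rewrite take_oversize ?size_tuple //.
  by rewrite inE => ->; rewrite inE /= window_periodic_wrap.
Qed.

End Windows.

Section ClosedWalks.
Variables (s : nat) (G : Defs.rgraph s).
Local Notation V := {set rgT G}.
Local Notation delta := (@rg_delta s G).

Lemma rg_path_word (u : V) p : path (@rg_edge s G) u p ->
  exists w, size w = size p /\ foldl delta u w = last u p.
Proof.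
elim: p u => [|v p IHp] u /=; first by exists [::].
case/andP=> /existsP[c /eqP delta_uc] /IHp[w [size_w run_w]].
by exists (c :: w); rewrite /= size_w delta_uc run_w.
Qed.

Lemma rg_circuit_word (C : seq V) N : rg_circuit C -> N \in C ->
  exists w, size w = size C /\ foldl delta N w = N.
Proof.
case/and3P=> _ _ cycC /rot_to[i C' rotC].
move: cycC; rewrite -(rot_cycle i) rotC /= => /rg_path_word[w [size_w run_w]].
by exists w; rewrite run_w last_rcons size_w size_rcons -(size_rot i C) rotC.
Qed.

Lemma closed_word_iter N u m : foldl delta N u = N ->
  exists w, size w = m * size u /\ foldl delta N w = N.
Proof.
move=> run_u; elim: m => [|m [w [size_w run_w]]]; first by exists [::].
by exists (u ++ w); rewrite foldl_cat run_u run_w size_cat size_w mulSn.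
Qed.

Lemma circuits_closed_word i (C : 'I_i -> seq V) N (m : 'I_i -> nat) :
  (forall j, rg_circuit (C j) /\ N \in C j) -> forall js : seq 'I_i,
  exists w, size w = \sum_(j <- js) m j * size (C j) /\ foldl delta N w = N.
Proof.
move=> circC; elim=> [|j js [w [size_w run_w]]]; first by exists [::]; rewrite big_nil.
have [u [size_u run_u]] := rg_circuit_word (proj1 (circC j)) (proj2 (circC j)).
have [v [size_v run_v]] := closed_word_iter (m j) run_u.
by exists (v ++ w); rewrite foldl_cat run_v run_w size_cat big_cons size_v size_w size_u.
Qed.

End ClosedWalks.

Theorem theorem3 (s l r : nat) (f : (l + r).+1.-tuple 'I_s.+1 -> 'I_s.+1)
  (b : boundary) (hm : 0 < l + r)
  (N : {set rgT (RG f b)}) (k : nat) :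
  rg_value N k -> 1 <= k -> rg_negative N ->
  forall (i : nat) (C : 'I_i -> seq {set rgT (RG f b)}),
    (forall j, rg_circuit (C j) /\ N \in C j) ->
    forall x : 'I_i -> nat,
      ~ reversible f b (k + \sum_(j < i) x j * size (C j)).
Proof.
move=> [[w [size_w run_w]] _] k_gt0 negN i C circC x [g _ tau_g].
have [u [size_u run_u]] := circuits_closed_word x circC (index_enum 'I_i).
pose n := k + \sum_(j < i) x j * size (C j).
have size_wu : size (w ++ u) == n by rewrite size_cat size_w size_u.
have := rg_run_tau_acc f b (g (Tuple size_wu)) (leq_trans k_gt0 (leq_addr _ _)).
by rewrite tau_g /rg_run foldl_cat -/(rg_run _ w) run_w run_u (eqP negN) eqxx.
Qed.
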